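(* Let $\gamma_2>0$. For every time step $t\ge1$, the first difference $\Delta L_3(t):=L_3(t+1)-L_3(t)$ of $$L_3(t)=\frac{1}{l_c\gamma_2}\operatorname{tr}\!\left[\big(\tilde w_c^{(1)}(t)\big)^T\tilde w_c^{(1)}(t)\right]$$ satisfies $$\Delta L_3(t)\le\frac1{\gamma_2}\Big(\alpha^2 l_c\, e_c(t)^2\,\|a(t)\|^2\|y(t)\|^2+\alpha\big(a(t)^T\tilde w_c^{(1)}(t)y(t)\big)^2+\alpha\, e_c(t)^2\Big),$$ where $e_c(t)=\alpha\hat w_c^{(2)}(t)\phi_c(t)+r(t)-\hat w_c^{(2)}(t-1)\phi_c(t-1)$.
   Context: Setting (action-dependent heuristic dynamic programming with two one-hidden-layer networks). Fix integers $m,n,N_a,N_c\ge1$, a discount factor $\alpha\in(0,1]$ and learning rates $l_c,l_a>0$. Let $\psi(s)=\frac{1-e^{-s}}{1+e^{-s}}$, applied componentwise to vectors (note $\psi'(s)=\tfrac12(1-\psi(s)^2)$). At each integer time $t$ there are a state $x(t)\in\mathbb R^m$ and a scalar reward $r(t)$. Action network: weights $\hat w_a^{(1)}(t)\in\mathbb R^{N_a\times m}$, $\hat w_a^{(2)}(t)\in\mathbb R^{n\times N_a}$; hidden output $\phi_a(t)=\psi(\hat w_a^{(1)}(t)x(t))\in\mathbb R^{N_a}$; control $u(t)=\hat w_a^{(2)}(t)\phi_a(t)\in\mathbb R^n$. Critic network: weights $\hat w_c^{(1)}(t)\in\mathbb R^{N_c\times(m+n)}$, $\hat w_c^{(2)}(t)\in\mathbb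 R^{1\times N_c}$ (a row vector); input $y(t)=(x(t)^T,u(t)^T)^T\in\mathbb R^{m+n}$; hidden output $\phi_c(t)=\psi(\hat w_c^{(1)}(t)y(t))\in\mathbb R^{N_c}$; output $\hat J(t)=\hat w_c^{(2)}(t)\phi_c(t)$. Critic error $e_c(t)=\alpha\hat J(t)+r(t)-\hat J(t-1)$. Auxiliary quantities: $C(t)\in\mathbb R^{N_c\times n}$ with $C_{ij}(t)=\tfrac12(1-\phi_{c_i}(t)^2)\,(\hat w_c^{(1)}(t))_{i,m+j}$; $a(t)\in\mathbb R^{N_c}$ with $a_i(t)=\tfrac12(1-\phi_{c_i}(t)^2)(\hat w_c^{(2)}(t))_i$; $D(t)\in\mathbb R^{N_a\times n}$ with $D_{ij}(t)=\tfrac12(1-\phi_{a_i}(t)^2)(\hat w_a^{(2)}(t))_{ji}$. The weights are updated by gradient descent: $\hat w_c^{(2)}(t+1)=\hat w_c^{(2)}(t)-l_c\alpha e_c(t)\phi_c(t)^T$, $\hat w_c^{(1)}(t+1)=\hat w_c^{(1)}(t)-l_c\alpha e_c(t)\,a(t)y(t)^T$, $\hat w_a^{(2)}(t+1)=\hat w_a^{(2)}(t)-l_a\hat J(t)\,(\hat w_c^{(2)}(t)C(t))^T\phi_a(t)^T$, $\hat w_a^{(1)}(t+1)=\hat w_a^{(1)}(t)-l_a\hat J(t)\,(\hat w_c^{(2)}(t)C(t)D(t)^T)^T x(t)^T$. Fixed (time-independent) ''optimal'' weights $w_c^{*(1)},w_c^{*(2)},w_a^{*(1)},w_a^{*(2)}$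 of the same shapes are given, and the estimation errors are $\tilde w_\bullet(t)=\hat w_\bullet(t)-w_\bullet^{*}$. Assumption 1: $\|w_a^*\|\le w_a^{\max}$ and $\|w_c^*\|\le w_c^{\max}$. Norms are Euclidean for vectors and Frobenius for matrices. *)

(* Stdlib reals (psi needs exp). Vectors/matrices are total functions
   on nat indices; only entries inside the stated dimensions are ever used. *)
From Stdlib Require Import Reals Lra Lia.
Open Scope R_scope.

Definition Vec := nat -> R.
Definition Mat := nat -> nat -> R.

Fixpoint rsum (n : nat) (f : nat -> R) : R :=
  match n with O => 0 | S k => rsum k f + f k end.

Definition psi (s : R) : R := (1 - exp (- s)) / (1 + exp (- s)).

Definition matmul (q : nat) (A B : Mat) : Mat :=
  fun i k => rsum q (fun j => A i j * B j k).
Definition trmx (A : Mat) : Mat := fun i j => A j i.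
Definition trace (n : nat) (A : Mat) : R := rsum n (fun i => A i i).
Definition vnorm (n : nat) (v : Vec) : R := sqrt (rsum n (fun i => v i ^ 2)).
Definition fnorm (p q : nat) (A : Mat) : R :=
  sqrt (rsum p (fun i => rsum q (fun j => A i j ^ 2))).

Section ADHDP.
Variables (m n Na Nc : nat) (alpha : R).
Variables (x : nat -> Vec) (r : nat -> R).
Variables (wa1 wa2 wc1 wc2 : nat -> Mat).
(* wa1 t : Na x m, wa2 t : n x Na, wc1 t : Nc x (m+n), wc2 t : 1 x Nc *)

Definition phi_a (t : nat) : Vec :=
  fun i => psi (rsum m (fun j => wa1 t i j * x t j)).
Definition u (t : nat) : Vec :=
  fun k => rsum Na (fun i => wa2 t k i * phi_a t i).
Definition y (t : nat) : Vec :=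
  fun k => if Nat.ltb k m then x t k else u t (k - m)%nat.
Definition phi_c (t : nat) : Vec :=
  fun i => psi (rsum (m + n)%nat (fun k => wc1 t i k * y t k)).
Definition Jhat (t : nat) : R := rsum Nc (fun i => wc2 t 0%nat i * phi_c t i).
(* used only for t >= 1 *)
Definition e_c (t : nat) : R := alpha * Jhat t + r t - Jhat (t - 1)%nat.
Definition Cmat (t : nat) : Mat :=
  fun i j => / 2 * (1 - phi_c t i ^ 2) * wc1 t i (m + j)%nat.
Definition avec (t : nat) : Vec :=
  fun i => / 2 * (1 - phi_c t i ^ 2) * wc2 t 0%nat i.
Definition Dmat (t : nat) : Mat :=
  fun i j => / 2 * (1 - phi_a t i ^ 2) * wa2 t j i.
(* row vector wc2 C (1 x n), and wc2 C D^T (1 x Na) *)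
Definition wcC (t : nat) : Vec :=
  fun k => rsum Nc (fun i => wc2 t 0%nat i * Cmat t i k).
Definition wcCD (t : nat) : Vec :=
  fun l => rsum n (fun k => wcC t k * Dmat t l k).
End ADHDP.

(* The Lyapunov term L3(t) = tr(W(t)^T W(t)) / (lc gamma2) of the critic's
   first-layer error W(t) = wc1(t) - wc1* changes along the gradient step
   W(t+1) = W(t) - c a(t) y(t)^T, with c = lc alpha e_c(t), by a rank-one
   update.  Expanding the Frobenius norm of a rank-one update gives
     tr(W(t+1)^T W(t+1)) = tr(W^T W) - 2 c (a^T W y) + c^2 |a|^2 |y|^2,
   so  Delta L3 = (lc alpha^2 e_c^2 |a|^2 |y|^2 - 2 alpha e_c (a^T W y)) / gamma2,
   and the cross term is bounded by Young's inequality
     -2 alpha e s <= alpha s^2 + alpha e^2.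
   The file first collects the needed algebra of finite sums [rsum], then
   proves the rank-one Frobenius identity for arbitrary matrices, then the
   scalar Young bound, and finally derives [lemma3] from these. *)
From Stdlib Require Import Reals Lra Lia.
Open Scope R_scope.

Lemma rsum_ext (n : nat) (f g : nat -> R) :
  (forall i, (i < n)%nat -> f i = g i) -> rsum n f = rsum n g.
Proof.
  induction n as [|n IH]; intros Hfg; simpl; [reflexivity|].
  rewrite IH by (intros; apply Hfg; lia).
  rewrite Hfg by lia. reflexivity.
Qed.

Lemma rsum_plus (n : nat) (f g : nat -> R) :
  rsum n (fun i => f i + g i) = rsum n f + rsum n g.
Proof. induction n as [|n IH]; simpl; [ring|]. rewrite IH. ring. Qed.

Lemma rsum_scal (n : nat) (c : R) (f : nat -> R) :
  rsum n (fun i => c * f i) = c * rsum n f.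
Proof. induction n as [|n IH]; simpl; [ring|]. rewrite IH. ring. Qed.

Lemma rsum_swap (n p : nat) (f : nat -> nat -> R) :
  rsum n (fun i => rsum p (fun j => f i j)) = rsum p (fun j => rsum n (fun i => f i j)).
Proof.
  induction n as [|n IH]; simpl.
  - induction p as [|p IHp]; simpl; [reflexivity|]. rewrite <- IHp. ring.
  - rewrite IH, <- rsum_plus. reflexivity.
Qed.

Lemma rsum_nonneg (n : nat) (f : nat -> R) : (forall i, 0 <= f i) -> 0 <= rsum n f.
Proof. intros Hf; induction n as [|n IH]; simpl; [lra|]. specialize (Hf n). lra. Qed.

Lemma vnorm_sq (n : nat) (v : Vec) : vnorm n v ^ 2 = rsum n (fun i => v i ^ 2).
Proof.
  unfold vnorm. rewrite pow2_sqrt; [reflexivity|].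
  apply rsum_nonneg; intros; apply pow2_ge_0.
Qed.

Definition bilin (q p : nat) (a : Vec) (W : Mat) (v : Vec) : R :=
  rsum q (fun i => a i * rsum p (fun j => W i j * v j)).

Lemma trace_gram_rank_one (q p : nat) (A B : Mat) (a v : Vec) (c : R) :
  (forall i j, (i < q)%nat -> (j < p)%nat -> B i j = A i j - c * a i * v j) ->
  trace p (matmul q (trmx B) B)
  = trace p (matmul q (trmx A) A) - 2 * c * bilin q p a A v
    + c ^ 2 * (vnorm q a ^ 2 * vnorm p v ^ 2).
Proof.
  intros HB. unfold trace, matmul, trmx.
  rewrite (rsum_ext p _ (fun j => rsum q (fun i => A i j * A i j)
      + (-2 * c) * rsum q (fun i => a i * A i j * v j)
      + c ^ 2 * (v j ^ 2 * rsum q (fun i => a i ^ 2)))).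
  2:{ intros j Hj. rewrite <- !rsum_scal, <- !rsum_plus.
      apply rsum_ext; intros i Hi. rewrite HB by lia. ring. }
  assert (Hcross : rsum p (fun j => rsum q (fun i => a i * A i j * v j)) = bilin q p a A v).
  { unfold bilin. rewrite <- (rsum_swap q p (fun i j => a i * A i j * v j)).
    apply rsum_ext; intros i _. rewrite <- rsum_scal.
    apply rsum_ext; intros; ring. }
  assert (Hnorms : rsum p (fun j => v j ^ 2 * rsum q (fun i => a i ^ 2))
                   = vnorm q a ^ 2 * vnorm p v ^ 2).
  { rewrite (vnorm_sq q a), (vnorm_sq p v), <- rsum_scal.
    apply rsum_ext; intros; ring. }
  rewrite !rsum_plus, !rsum_scal, Hcross, Hnorms. ring.
Qed.

Lemma cross_term_bound (alpha e s : R) :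
  0 <= alpha -> - 2 * alpha * e * s <= alpha * s ^ 2 + alpha * e ^ 2.
Proof.
  intros Halpha.
  assert (0 <= alpha * (s + e) ^ 2) by (apply Rmult_le_pos; [lra | apply pow2_ge_0]).
  nra.
Qed.
Theorem lemma3
  (m n Na Nc : nat) (alpha lc la gamma2 wa_max wc_max : R)
  (x : nat -> Vec) (r : nat -> R)
  (wa1 wa2 wc1 wc2 : nat -> Mat)
  (wa1s wa2s wc1s wc2s : Mat)
  (Hm : (1 <= m)%nat) (Hn : (1 <= n)%nat) (HNa : (1 <= Na)%nat) (HNc : (1 <= Nc)%nat)
  (Halpha : 0 < alpha <= 1) (Hlc : 0 < lc) (Hla : 0 < la)
  (Hwa1s : fnorm Na m wa1s <= wa_max) (Hwa2s : fnorm n Na wa2s <= wa_max)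
  (Hwc1s : fnorm Nc (m + n) wc1s <= wc_max) (Hwc2s : fnorm 1 Nc wc2s <= wc_max)
  (Hupd_c2 : forall t j, (j < Nc)%nat ->
     wc2 (S t) 0%nat j = wc2 t 0%nat j
       - lc * alpha * e_c m n Na Nc alpha x r wa1 wa2 wc1 wc2 t
           * phi_c m n Na x wa1 wa2 wc1 t j)
  (Hupd_c1 : forall t i j, (i < Nc)%nat -> (j < m + n)%nat ->
     wc1 (S t) i j = wc1 t i j
       - lc * alpha * e_c m n Na Nc alpha x r wa1 wa2 wc1 wc2 t
           * avec m n Na x wa1 wa2 wc1 wc2 t i * y m Na x wa1 wa2 t j)
  (Hupd_a2 : forall t k l, (k < n)%nat -> (l < Na)%nat ->
     wa2 (S t) k l = wa2 t k l
       - la * Jhat m n Na Nc x wa1 wa2 wc1 wc2 t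
           * wcC m n Na Nc x wa1 wa2 wc1 wc2 t k * phi_a m x wa1 t l)
  (Hupd_a1 : forall t l j, (l < Na)%nat -> (j < m)%nat ->
     wa1 (S t) l j = wa1 t l j
       - la * Jhat m n Na Nc x wa1 wa2 wc1 wc2 t
           * wcCD m n Na Nc x wa1 wa2 wc1 wc2 t l * x t j)
  (Hgamma2 : 0 < gamma2) :
  let wtc1 := fun t i j => wc1 t i j - wc1s i j in
  let L3 := fun t => / (lc * gamma2) *
      trace (m + n) (matmul Nc (trmx (wtc1 t)) (wtc1 t)) in
  forall t : nat, (1 <= t)%nat ->
    let ec := e_c m n Na Nc alpha x r wa1 wa2 wc1 wc2 t in
    let a := avec m n Na x wa1 wa2 wc1 wc2 t in
    let yt := y m Na x wa1 wa2 t in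
    L3 (S t) - L3 t <=
      / gamma2 * (alpha ^ 2 * lc * ec ^ 2 * vnorm Nc a ^ 2 * vnorm (m + n) yt ^ 2
        + alpha * (rsum Nc (fun i => a i * rsum (m + n) (fun j => wtc1 t i j * yt j))) ^ 2
        + alpha * ec ^ 2).
Proof.
  intros wtc1 L3 t _ ec a yt.
  assert (Hstep : forall i j, (i < Nc)%nat -> (j < m + n)%nat ->
            wtc1 (S t) i j = wtc1 t i j - (lc * alpha * ec) * a i * yt j).
  { intros i j Hi Hj. unfold wtc1, ec, a, yt. rewrite Hupd_c1 by assumption. ring. }
  unfold L3. rewrite (trace_gram_rank_one Nc (m + n) _ _ a yt _ Hstep).
  fold (bilin Nc (m + n) a (wtc1 t) yt).
  set (s := bilin Nc (m + n) a (wtc1 t) yt).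
  set (T := trace (m + n) (matmul Nc (trmx (wtc1 t)) (wtc1 t))).
  replace (/ (lc * gamma2) * (T - 2 * (lc * alpha * ec) * s
             + (lc * alpha * ec) ^ 2 * (vnorm Nc a ^ 2 * vnorm (m + n) yt ^ 2))
           - / (lc * gamma2) * T)
    with (/ gamma2 * (alpha ^ 2 * lc * ec ^ 2 * vnorm Nc a ^ 2 * vnorm (m + n) yt ^ 2
                      - 2 * alpha * ec * s))
    by (field; lra).
  apply Rmult_le_compat_l; [left; apply Rinv_0_lt_compat; lra|].
  pose proof (cross_term_bound alpha ec s ltac:(lra)).
  lra.
Qed.
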